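(* Let $N\ge 1$, $M\ge 1$, let $x_1,\dots,x_N\in\mathbb{R}^M$, $y_1,\dots,y_N\in\mathbb{R}$, and let $X_N\in\mathbb{R}^{N\times M}$ be the matrix with rows $x_n^\top$ and $Y_N=(y_1,\dots,y_N)^\top$. Assume $X_N^\top X_N$ is invertible, and let $\theta_N=(X_N^\top X_N)^{-1}X_N^\top Y_N$. Fix a test vector $x\in\mathbb{R}^M$ and $\sigma>0$. For each $y\in\mathbb{R}$ let $$\hat\theta(y)=\arg\min_{\theta\in\mathbb{R}^M}\Big[\sum_{n=1}^N (y_n-x_n^\top\theta)^2+(y-x^\top\theta)^2\Big]$$ (the genie). Put $P_N=\dfrac{(X_N^\top X_N)^{-1}}{1+x^\top (X_N^\top X_N)^{-1}x}$. Then: (i) $y-x^\top\hat\theta(y)=(1-x^\top P_N x)(y-x^\top\theta_N)$ for every $y$; (ii) the normalization factor $K=\int_{\mathbb{R}} p_{\hat\theta(y')}(y'\mid x)\,dy'$ equals $$K=\frac{1}{1-x^\top P_N x}=1+x^\top (X_N^\top X_N)^{-1}x,$$ so the min-max regret is $\Gamma=\log K=\log\big(1+x^\top(X_N^\top X_N)^{-1}x\big)$; (iii) the pNML distribution $q_{\mathrm{pNML}}(y\mid x)=p_{\hat\theta(y)}(y\mid x)/K$ is $$q_{\mathrm{pNML}}(y\mid x)=\frac{1-x^\top P_N x}{\sqrt{2\pi\sigma^2}}\exp\Big\{-\frac{(1-x^\top P_N x)^2}{2\sigma^2}(y-x^\top\theta_N)^2\Big\},$$ i.e. a Gaussian with mean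 $x^\top\theta_N$ and variance $\sigma^2K^2$.
   Context: The hypothesis class is the Gaussian linear model $p_\theta(y\mid x)=\frac{1}{\sqrt{2\pi\sigma^2}}\exp\{-\frac{1}{2\sigma^2}(y-x^\top\theta)^2\}$, $\theta\in\mathbb{R}^M$. The pNML (predictive normalized maximum likelihood) learner is $q_{\mathrm{pNML}}(y\mid x)=p_{\hat\theta(y)}(y\mid x)/\int p_{\hat\theta(y')}(y'\mid x)\,dy'$, where $\hat\theta(y)$ is the genie: the hypothesis maximizing the likelihood of the training set together with the test pair $(x,y)$. *)

From HB Require Import structures.
From mathcomp Require Import all_boot all_order all_algebra.
From mathcomp Require Import all_classical all_reals all_analysis.
Set Implicit Arguments. Unset Strict Implicit. Unset Printing Implicit Defensive.
Import Order.TTheory GRing.Theory Num.Theory.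
Local Open Scope ring_scope.

Definition dotv (R : realType) (M : nat) (u v : 'cV[R]_M) : R := (u^T *m v) 0 0.

Definition gauss_pdf (R : realType) (s mu y : R) : R :=
  (Num.sqrt (2 * pi * s ^+ 2))^-1 * expR (- (y - mu) ^+ 2 / (2 * s ^+ 2)).

Definition plin (R : realType) (M : nat) (sigma : R) (theta x : 'cV[R]_M) (y : R) : R :=
  gauss_pdf sigma (dotv x theta) y.

Definition genie_loss (R : realType) (N M : nat) (X : 'M[R]_(N, M)) (Y : 'cV[R]_N)
    (x : 'cV[R]_M) (y : R) (theta : 'cV[R]_M) : R :=
  \sum_(n < N) (Y n 0 - (X *m theta) n 0) ^+ 2 + (y - dotv x theta) ^+ 2.

Definition is_genie (R : realType) (N M : nat) (X : 'M[R]_(N, M)) (Y : 'cV[R]_N)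
    (x : 'cV[R]_M) (y : R) (theta : 'cV[R]_M) : Prop :=
  forall theta' : 'cV[R]_M, genie_loss X Y x y theta <= genie_loss X Y x y theta'.

Definition thetaN (R : realType) (N M : nat) (X : 'M[R]_(N, M)) (Y : 'cV[R]_N) : 'cV[R]_M :=
  invmx (X^T *m X) *m X^T *m Y.

Definition PN (R : realType) (N M : nat) (X : 'M[R]_(N, M)) (x : 'cV[R]_M) : 'M[R]_M :=
  (1 + dotv x (invmx (X^T *m X) *m x))^-1 *: invmx (X^T *m X).

Definition pnml_norm (R : realType) (M : nat) (sigma : R) (x : 'cV[R]_M)
    (genie : R -> 'cV[R]_M) : \bar R :=
  (\int[@lebesgue_measure R]_(y in [set: R]) (plin sigma (genie y) x y)%:E)%E.

Definition q_pnml (R : realType) (M : nat) (sigma : R) (x : 'cV[R]_M)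
    (genie : R -> 'cV[R]_M) (y : R) : R :=
  plin sigma (genie y) x y / fine (pnml_norm sigma x genie).

From HB Require Import structures.
From mathcomp Require Import all_boot all_order all_algebra.
From mathcomp Require Import all_classical all_reals all_analysis.
From mathcomp Require Import ring lra.
Set Implicit Arguments. Unset Strict Implicit. Unset Printing Implicit Defensive.
Import Order.TTheory GRing.Theory Num.Theory.
Local Open Scope ring_scope.

(* The genie loss is a convex quadratic in theta, so its minimiser solves the
   normal equations (X^T X) theta = X^T Y + r x, where r := y - x^T theta is the
   test residual.  Hence theta = theta_N + r (X^T X)^{-1} x, and taking the inner
   product with x gives r = (y - x^T theta_N) / (1 + c) with
   c := x^T (X^T X)^{-1} x >= 0.  The genie likelihood of y is therefore a
   Gaussian in y of standard deviation sigma (1 + c), rescaled by 1 + c; it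
   integrates to K = 1 + c, and dividing by K gives the pNML density. *)

Section InnerProduct.
Variables (R : realType) (M : nat).
Implicit Types (u v w : 'cV[R]_M).

Lemma dotvE u v : dotv u v = \sum_i u i 0 * v i 0.
Proof. by rewrite /dotv !mxE; apply: eq_bigr => i _; rewrite mxE. Qed.

Lemma dotvC u v : dotv u v = dotv v u.
Proof. by rewrite !dotvE; apply: eq_bigr => i _; rewrite mulrC. Qed.

Lemma dotvDl u w v : dotv (u + w) v = dotv u v + dotv w v.
Proof. by rewrite !dotvE -big_split; apply: eq_bigr => i _; rewrite mxE mulrDl. Qed.

Lemma dotvZl k u v : dotv (k *: u) v = k * dotv u v.
Proof. by rewrite !dotvE mulr_sumr; apply: eq_bigr => i _; rewrite mxE mulrA. Qed.

Lemma dotvDr u w v : dotv v (u + w) = dotv v u + dotv v w.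
Proof. by rewrite !(dotvC v) dotvDl. Qed.

Lemma dotvZr k u v : dotv v (k *: u) = k * dotv v u.
Proof. by rewrite !(dotvC v) dotvZl. Qed.

Lemma dotv_ge0 u : 0 <= dotv u u.
Proof. by rewrite dotvE; apply: sumr_ge0 => i _; rewrite -expr2 sqr_ge0. Qed.

Lemma dotv_eq0 u : (dotv u u == 0) = (u == 0).
Proof.
apply/eqP/eqP => [|->]; last by rewrite dotvE big1 // => i _; rewrite mxE mul0r.
rewrite dotvE => /psumr_eq0P u0; apply/matrixP => i j.
rewrite (ord1 j) mxE; apply/eqP; rewrite -sqrf_eq0 expr2.
by apply/eqP; apply: u0 => // k _; rewrite -expr2 sqr_ge0.
Qed.

End InnerProduct.

Lemma dotv_mulmx (R : realType) (M K : nat) (u : 'cV[R]_M) (B : 'M[R]_(M, K)) v :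
  dotv u (B *m v) = dotv (B^T *m u) v.
Proof. by rewrite /dotv mulmxA trmx_mul trmxK. Qed.

Lemma dotv_invmx_gram_ge0 (R : realType) (N M : nat) (X : 'M[R]_(N, M)) x :
  X^T *m X \in unitmx -> 0 <= dotv x (invmx (X^T *m X) *m x).
Proof.
move=> U; rewrite -{1}(mulKVmx U x) dotvC -mulmxA dotv_mulmx trmxK.
exact: dotv_ge0.
Qed.

Lemma quadratic_min_at0 (R : realFieldType) (L S Q : R) :
  0 <= Q -> (forall t, L <= L - 2 * t * S + t ^+ 2 * Q) -> S = 0.
Proof.
move=> Q0 Lmin; set t := S / (Q + 1).
have tQ : t * (Q + 1) = S by rewrite /t divfK // gt_eqF // ltr_wpDl.
have := Lmin t; nra.
Qed.

Section Genie.
Variables (R : realType) (N M : nat) (X : 'M[R]_(N, M)) (Y : 'cV[R]_N).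
Variables (x : 'cV[R]_M) (y : R).

Lemma genie_lossE theta : genie_loss X Y x y theta =
  dotv (Y - X *m theta) (Y - X *m theta) + (y - dotv x theta) ^+ 2.
Proof.
rewrite /genie_loss [dotv (Y - _) _]dotvE; congr (_ + _).
by apply: eq_bigr => i _; rewrite !mxE expr2.
Qed.

Lemma genie_loss_shift theta v t :
  let e := Y - X *m theta in let r := y - dotv x theta in
  genie_loss X Y x y (theta + t *: v) = genie_loss X Y x y theta
    - 2 * t * dotv (X^T *m e + r *: x) v
    + t ^+ 2 * (dotv (X *m v) (X *m v) + dotv x v ^+ 2).
Proof.
move=> e r; rewrite !genie_lossE.
have -> : Y - X *m (theta + t *: v) = e + (- t) *: (X *m v).
  by rewrite mulmxDr -scalemxAr scaleNr opprD addrA.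
have -> : y - dotv x (theta + t *: v) = r - t * dotv x v.
  by rewrite dotvDr dotvZr opprD addrA.
rewrite -/e -/r; clearbody e r.
rewrite [dotv (_ + r *: x) v]dotvDl -dotv_mulmx.
by rewrite !dotvDl !dotvDr !dotvZl !dotvZr (dotvC (X *m v) e); ring.
Qed.

Lemma is_genie_normal_eq theta : is_genie X Y x y theta ->
  X^T *m (Y - X *m theta) + (y - dotv x theta) *: x = 0.
Proof.
move=> gen; set g := _ + _; apply/eqP; rewrite -dotv_eq0; apply/eqP.
apply: (@quadratic_min_at0 _ (genie_loss X Y x y theta) _
  (dotv (X *m g) (X *m g) + dotv x g ^+ 2)).
  by rewrite addr_ge0 ?dotv_ge0 ?sqr_ge0.
by move=> t; rewrite -genie_loss_shift.
Qed.

Hypothesis U : X^T *m X \in unitmx.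

Lemma is_genieE theta : is_genie X Y x y theta ->
  theta = thetaN X Y + (y - dotv x theta) *: (invmx (X^T *m X) *m x).
Proof.
move=> /is_genie_normal_eq /eqP; rewrite mulmxBr mulmxA addrAC subr_eq0 => /eqP gram.
by rewrite -{1}[theta](mulKmx U) -gram mulmxDr -scalemxAr /thetaN mulmxA.
Qed.

Lemma genie_residual theta : is_genie X Y x y theta ->
  y - dotv x theta =
  (1 + dotv x (invmx (X^T *m X) *m x))^-1 * (y - dotv x (thetaN X Y)).
Proof.
move=> /is_genieE thetaE.
set c := dotv x (invmx _ *m x); set m := dotv x (thetaN X Y).
have c1 : 1 + c != 0 by rewrite gt_eqF ?ltr_wpDr ?dotv_invmx_gram_ge0.
set d := dotv x theta.
have dE : d = m + (y - d) * c by rewrite /d {1}thetaE dotvDr dotvZr.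
apply: (mulfI c1); rewrite mulrA mulfV // mul1r.
have -> : m = d - (y - d) * c by rewrite {1}dE addrK.
ring.
Qed.

Lemma one_sub_PN_quad :
  1 - dotv x (PN X x *m x) = (1 + dotv x (invmx (X^T *m X) *m x))^-1.
Proof.
have c0 := dotv_invmx_gram_ge0 x U.
rewrite /PN -scalemxAl dotvZr; move: (dotv x _) c0 => c c0.
by field; rewrite gt_eqF ?ltr_wpDr.
Qed.

End Genie.

Section Gaussian.
Variable R : realType.

Lemma gauss_pdf_normal_pdf (s mu y : R) : s != 0 -> gauss_pdf s mu y = normal_pdf mu s y.
Proof.
move=> s0; rewrite /normal_pdf (negbTE s0) /normal_peak /normal_fun /gauss_pdf.
have -> : s ^+ 2 * pi *+ 2 = 2 * pi * s ^+ 2 by rewrite -mulr_natr; ring.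
by have -> : s ^+ 2 *+ 2 = 2 * s ^+ 2 by rewrite -mulr_natr; ring.
Qed.

Lemma integral_gauss_pdf (s mu : R) : s != 0 ->
  (\int[@lebesgue_measure R]_(y in [set: R]) (gauss_pdf s mu y)%:E = 1)%E.
Proof.
move=> s0; under eq_integral do rewrite gauss_pdf_normal_pdf //.
exact: integral_normal_pdf.
Qed.

Lemma integrable_gauss_pdf (s mu : R) : s != 0 ->
  (@lebesgue_measure R).-integrable [set: R] (fun y => (gauss_pdf s mu y)%:E).
Proof.
move=> s0; under eq_fun do rewrite gauss_pdf_normal_pdf //.
exact: integrable_normal_pdf.
Qed.

Lemma gauss_pdf_divE (s a mu y : R) : s != 0 -> 0 < a ->
  gauss_pdf (s / a) mu y =
  a / Num.sqrt (2 * pi * s ^+ 2) * expR (- (a ^+ 2 / (2 * s ^+ 2)) * (y - mu) ^+ 2).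
Proof.
move=> s0 a0; rewrite /gauss_pdf exprMn mulrA sqrtrM; last first.
  by rewrite mulr_ge0 ?sqr_ge0 // mulr_ge0 ?pi_ge0.
rewrite sqrtr_sqr ger0_norm ?invr_ge0 ?ltW // invfM invrK [_^-1 * a]mulrC.
by congr (_ * expR _); field; rewrite s0 gt_eqF.
Qed.

Lemma gauss_pdf_scale_residual (s a mu mu' y : R) : s != 0 -> 0 < a ->
  y - mu' = a * (y - mu) -> gauss_pdf s mu' y = a^-1 * gauss_pdf (s / a) mu y.
Proof.
move=> s0 a0 res; rewrite gauss_pdf_divE // mulrA mulKf ?gt_eqF //.
by rewrite /gauss_pdf res; congr (_ * expR _); field.
Qed.

End Gaussian.

Theorem mainTheorem1 (R : realType) (N M : nat) (X : 'M[R]_(N, M)) (Y : 'cV[R]_N)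
    (x : 'cV[R]_M) (sigma : R) (genie : R -> 'cV[R]_M) :
  (0 < N)%N -> (0 < M)%N ->
  X^T *m X \in unitmx ->
  0 < sigma ->
  (forall y : R, is_genie X Y x y (genie y)) ->
  let a := 1 - dotv x (PN X x *m x) in
  (* (i) *)
  (forall y : R, y - dotv x (genie y) = a * (y - dotv x (thetaN X Y))) /\
  (* (ii) *)
  (pnml_norm sigma x genie = (a^-1)%:E /\
   a^-1 = 1 + dotv x (invmx (X^T *m X) *m x) /\
   ln (fine (pnml_norm sigma x genie)) = ln (1 + dotv x (invmx (X^T *m X) *m x))) /\
  (* (iii) *)
  (forall y : R,
     q_pnml sigma x genie y =
       a / Num.sqrt (2 * pi * sigma ^+ 2) *
       expR (- (a ^+ 2 / (2 * sigma ^+ 2)) * (y - dotv x (thetaN X Y)) ^+ 2) /\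
     q_pnml sigma x genie y =
       gauss_pdf (sigma * a^-1) (dotv x (thetaN X Y)) y).
Proof.
move=> _ _ U sigma0 gen a.
set m := dotv x (thetaN X Y).
have aE : a^-1 = 1 + dotv x (invmx (X^T *m X) *m x) by rewrite /a one_sub_PN_quad ?invrK.
have a0 : 0 < a by rewrite /a one_sub_PN_quad // invr_gt0 ltr_wpDr ?dotv_invmx_gram_ge0.
have sigma0' : sigma != 0 by rewrite gt_eqF.
have residual y : y - dotv x (genie y) = a * (y - m).
  by rewrite /a one_sub_PN_quad // (genie_residual U (gen y)).
have plinE y : plin sigma (genie y) x y = a^-1 * gauss_pdf (sigma / a) m y.
  exact: gauss_pdf_scale_residual.
have KE : pnml_norm sigma x genie = (a^-1)%:E.
  rewrite /pnml_norm; under eq_integral do rewrite plinE EFinM.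
  rewrite integralZl ?integrable_gauss_pdf ?mulf_neq0 ?invr_eq0 ?gt_eqF //.
  by rewrite integral_gauss_pdf ?mule1 // mulf_neq0 ?invr_eq0 ?gt_eqF.
have qE y : q_pnml sigma x genie y = gauss_pdf (sigma / a) m y.
  by rewrite /q_pnml KE /= plinE mulrC mulKf // invr_eq0 gt_eqF.
split=> //; split; first by rewrite KE /= aE.
by move=> y; rewrite qE gauss_pdf_divE.
Qed.
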